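(* The cut rule is admissible in the cut-free fragment of BIS4: for all bunches $\Delta$, bunched contexts $\Gamma(-)$ and formulas $\psi,\varphi$ of BIS4, if $\Delta\vdash_{\mathsf{cf}}\psi$ and $\Gamma(\psi)\vdash_{\mathsf{cf}}\varphi$, then $\Gamma(\Delta)\vdash_{\mathsf{cf}}\varphi$.
   Context: Formulas of BIS4: $\varphi,\psi ::= \top \mid \bot \mid \varphi\wedge\psi \mid \varphi\vee\psi \mid \varphi\to\psi \mid \mathsf{emp} \mid \varphi\ast\psi \mid \varphi -\!\!\ast\, \psi \mid \Box\varphi \mid a$, where $a$ ranges over a fixed set $\mathrm{Atom}$. Bunches are finite binary trees whose leaves are formulas or one of two empty bunches $\varnothing_m,\varnothing_a$, and whose internal nodes are labelled either by the multiplicative comma ($\Delta_1 \mathbin{,} \Delta_2$) or the additive semicolon ($\Delta_1 \mathbin{;} \Delta_2$). A bunched context $\Delta(-)$ is a bunch with exactly one leaf replaced by a hole; $\Delta(\Gamma)$ is the result of filling the hole with $\Gamma$. Bunch equivalence $\equiv$ is the least equivalence relation such that $\mathbin{,}$ is commutative and associative with unit $\varnothing_m$, $\mathbin{;}$ is commutative and associative with unit $\varnothing_a$, and $\Delta\equiv\Delta'$ implies $\Gamma(\Delta)\equiv\Gamma(\Delta')$. For a bunch $\Delta$, $\Box\Delta$ is the bunch obtained by replacing every formula leaf $\chi$ of $\Delta$ by $\Box\chi$ (empty bunches and node labels unchanged). The BIS4 sequent calculus has the rules: (ax) $a\vdash a$ for $a\in\mathrm{Atom}$; (equiv) from $\Delta'\vdash\varphi$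 and $\Delta\equiv\Delta'$ infer $\Delta\vdash\varphi$; (W;) from $\Delta(\Delta_1)\vdash\varphi$ infer $\Delta(\Delta_1\mathbin{;}\Delta_2)\vdash\varphi$; (C;) from $\Delta(\Delta_1\mathbin{;}\Delta_1)\vdash\varphi$ infer $\Delta(\Delta_1)\vdash\varphi$; (cut) from $\Delta'\vdash A$ and $\Delta(A)\vdash B$ infer $\Delta(\Delta')\vdash B$; (empR) $\varnothing_m\vdash\mathsf{emp}$; (empL) from $\Delta(\varnothing_m)\vdash\varphi$ infer $\Delta(\mathsf{emp})\vdash\varphi$; ($\ast$R) from $\Delta_1\vdash\varphi$, $\Delta_2\vdash\psi$ infer $\Delta_1\mathbin{,}\Delta_2\vdash\varphi\ast\psi$; ($\ast$L) from $\Delta(\varphi\mathbin{,}\psi)\vdash\chi$ infer $\Delta(\varphi\ast\psi)\vdash\chi$; ($-\!\ast$R) from $\Delta\mathbin{,}\varphi\vdash\psi$ infer $\Delta\vdash\varphi-\!\!\ast\,\psi$; ($-\!\ast$L) from $\Delta_1\vdash\varphi$ and $\Delta(\Delta_2\mathbin{,}\psi)\vdash\chi$ infer $\Delta((\Delta_1\mathbin{,}\Delta_2)\mathbin{,}(\varphi-\!\!\ast\,\psi))\vdash\chi$; ($\top$R) $\varnothing_a\vdash\top$; ($\top$L) from $\Delta(\varnothing_a)\vdash\varphi$ infer $\Delta(\top)\vdash\varphi$; ($\wedge$R) from $\Delta_1\vdash\varphi$, $\Delta_2\vdash\psi$ infer $\Delta_1\mathbin{;}\Delta_2\vdash\varphi\wedge\psi$;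 ($\wedge$L) from $\Delta(\varphi\mathbin{;}\psi)\vdash\chi$ infer $\Delta(\varphi\wedge\psi)\vdash\chi$; ($\to$R) from $\Delta\mathbin{;}\varphi\vdash\psi$ infer $\Delta\vdash\varphi\to\psi$; ($\to$L) from $\Delta_1\vdash\varphi$ and $\Delta(\Delta_2\mathbin{;}\psi)\vdash\chi$ infer $\Delta((\Delta_1\mathbin{;}\Delta_2)\mathbin{;}(\varphi\to\psi))\vdash\chi$; ($\bot$L) $\Delta(\bot)\vdash\varphi$; ($\vee$R1),($\vee$R2) from $\Delta\vdash\varphi$ (resp. $\Delta\vdash\psi$) infer $\Delta\vdash\varphi\vee\psi$; ($\vee$L) from $\Delta(\varphi)\vdash\chi$ and $\Delta(\psi)\vdash\chi$ infer $\Delta(\varphi\vee\psi)\vdash\chi$; ($\Box$R) from $\Box\Delta\vdash A$ infer $\Box\Delta\vdash\Box A$; ($\Box$L) from $\Delta(A)\vdash B$ infer $\Delta(\Box A)\vdash B$. $\Delta\vdash_{\mathsf{cf}}\varphi$ means $\Delta\vdash\varphi$ is derivable in BIS4 without the (cut) rule. *)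

From Stdlib Require Import Bool.

Set Implicit Arguments.

Section BIS4.
Variable Atom : Type.

Inductive formula : Type :=
| FTop | FBot
| FAnd (p q : formula) | FOr (p q : formula) | FImp (p q : formula)
| FEmp | FStar (p q : formula) | FWand (p q : formula)
| FBox (p : formula)
| FAtom (a : Atom).

Inductive bunch : Type :=
| BForm (p : formula)
| BEmpM
| BEmpA
| BComma (d1 d2 : bunch)
| BSemi (d1 d2 : bunch).

Inductive ctx : Type :=
| CHole
| CCommaL (c : ctx) (d : bunch)
| CCommaR (d : bunch) (c : ctx)
| CSemiL (c : ctx) (d : bunch)
| CSemiR (d : bunch) (c : ctx).

Fixpoint fill (c : ctx) (g : bunch) : bunch :=
  match c with
  | CHole => g
  | CCommaL c d => BComma (fill c g) d
  | CCommaR d c => BComma d (fill c g)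
  | CSemiL c d => BSemi (fill c g) d
  | CSemiR d c => BSemi d (fill c g)
  end.

Inductive bequiv : bunch -> bunch -> Prop :=
| beq_refl d : bequiv d d
| beq_sym d1 d2 : bequiv d1 d2 -> bequiv d2 d1
| beq_trans d1 d2 d3 : bequiv d1 d2 -> bequiv d2 d3 -> bequiv d1 d3
| beq_comma_comm d1 d2 : bequiv (BComma d1 d2) (BComma d2 d1)
| beq_comma_assoc d1 d2 d3 :
    bequiv (BComma d1 (BComma d2 d3)) (BComma (BComma d1 d2) d3)
| beq_comma_unit d : bequiv (BComma d BEmpM) d
| beq_semi_comm d1 d2 : bequiv (BSemi d1 d2) (BSemi d2 d1)
| beq_semi_assoc d1 d2 d3 :
    bequiv (BSemi d1 (BSemi d2 d3)) (BSemi (BSemi d1 d2) d3)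
| beq_semi_unit d : bequiv (BSemi d BEmpA) d
| beq_ctx (c : ctx) d1 d2 : bequiv d1 d2 -> bequiv (fill c d1) (fill c d2).

Fixpoint bbox (d : bunch) : bunch :=
  match d with
  | BForm p => BForm (FBox p)
  | BEmpM => BEmpM
  | BEmpA => BEmpA
  | BComma d1 d2 => BComma (bbox d1) (bbox d2)
  | BSemi d1 d2 => BSemi (bbox d1) (bbox d2)
  end.

(* The BIS4 sequent calculus; [cut_ok = false] gives the cut-free system. *)
Inductive deriv (cut_ok : bool) : bunch -> formula -> Prop :=
| d_ax a : deriv cut_ok (BForm (FAtom a)) (FAtom a)
| d_equiv d d' p : deriv cut_ok d' p -> bequiv d d' -> deriv cut_ok d p
| d_weak (c : ctx) d1 d2 p :
    deriv cut_ok (fill c d1) p -> deriv cut_ok (fill c (BSemi d1 d2)) p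
| d_contr (c : ctx) d1 p :
    deriv cut_ok (fill c (BSemi d1 d1)) p -> deriv cut_ok (fill c d1) p
| d_cut (c : ctx) d' a b :
    cut_ok = true ->
    deriv cut_ok d' a -> deriv cut_ok (fill c (BForm a)) b ->
    deriv cut_ok (fill c d') b
| d_empR : deriv cut_ok BEmpM FEmp
| d_empL (c : ctx) p :
    deriv cut_ok (fill c BEmpM) p -> deriv cut_ok (fill c (BForm FEmp)) p
| d_starR d1 d2 p q :
    deriv cut_ok d1 p -> deriv cut_ok d2 q ->
    deriv cut_ok (BComma d1 d2) (FStar p q)
| d_starL (c : ctx) p q r :
    deriv cut_ok (fill c (BComma (BForm p) (BForm q))) r ->
    deriv cut_ok (fill c (BForm (FStar p q))) r
| d_wandR d p q :
    deriv cut_ok (BComma d (BForm p)) q -> deriv cut_ok d (FWand p q)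
| d_wandL (c : ctx) d1 d2 p q r :
    deriv cut_ok d1 p -> deriv cut_ok (fill c (BComma d2 (BForm q))) r ->
    deriv cut_ok (fill c (BComma (BComma d1 d2) (BForm (FWand p q)))) r
| d_topR : deriv cut_ok BEmpA FTop
| d_topL (c : ctx) p :
    deriv cut_ok (fill c BEmpA) p -> deriv cut_ok (fill c (BForm FTop)) p
| d_andR d1 d2 p q :
    deriv cut_ok d1 p -> deriv cut_ok d2 q ->
    deriv cut_ok (BSemi d1 d2) (FAnd p q)
| d_andL (c : ctx) p q r :
    deriv cut_ok (fill c (BSemi (BForm p) (BForm q))) r ->
    deriv cut_ok (fill c (BForm (FAnd p q))) r
| d_impR d p q :
    deriv cut_ok (BSemi d (BForm p)) q -> deriv cut_ok d (FImp p q)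
| d_impL (c : ctx) d1 d2 p q r :
    deriv cut_ok d1 p -> deriv cut_ok (fill c (BSemi d2 (BForm q))) r ->
    deriv cut_ok (fill c (BSemi (BSemi d1 d2) (BForm (FImp p q)))) r
| d_botL (c : ctx) p : deriv cut_ok (fill c (BForm FBot)) p
| d_orR1 d p q : deriv cut_ok d p -> deriv cut_ok d (FOr p q)
| d_orR2 d p q : deriv cut_ok d q -> deriv cut_ok d (FOr p q)
| d_orL (c : ctx) p q r :
    deriv cut_ok (fill c (BForm p)) r -> deriv cut_ok (fill c (BForm q)) r ->
    deriv cut_ok (fill c (BForm (FOr p q))) r
| d_boxR d a :
    deriv cut_ok (bbox d) a -> deriv cut_ok (bbox d) (FBox a)
| d_boxL (c : ctx) a b :
    deriv cut_ok (fill c (BForm a)) b -> deriv cut_ok (fill c (BForm (FBox a))) b.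

Definition deriv_cf (d : bunch) (p : formula) : Prop := deriv false d p.

End BIS4.

(* Induction on the cut formula ψ and, for fixed ψ, on the derivation of
   Δ ⊢ ψ.  Structural and left rules ending that derivation permute upwards
   past the cut.  If it ends with a right rule, ψ is principal, and we replace
   in the derivation of Γ(ψ) ⊢ φ an arbitrary set of occurrences of ψ by Δ at
   once (a multicut, which is what makes contraction harmless).  The only
   rules that act on a replaced occurrence are the left rule for ψ, simulated
   by cuts on the immediate subformulas of ψ, and □R, whose context stays
   boxed because Δ is itself boxed when ψ = □A (it was produced by □R). *)


#[local] Arguments CHole {Atom}.
#[local] Arguments BEmpM {Atom}.
#[local] Arguments BEmpA {Atom}.
#[local] Arguments FTop {Atom}.
#[local] Arguments FBot {Atom}.
#[local] Arguments FEmp {Atom}.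

Section CutAdmissibility.
Variable Atom : Type.
Notation formula := (formula Atom).
Notation bunch := (bunch Atom).
Notation ctx := (ctx Atom).
Notation cf := (deriv false).

Fixpoint ctx_comp (G c : ctx) : ctx :=
  match G with
  | CHole => c
  | CCommaL G' d => CCommaL (ctx_comp G' c) d
  | CCommaR d G' => CCommaR d (ctx_comp G' c)
  | CSemiL G' d => CSemiL (ctx_comp G' c) d
  | CSemiR d G' => CSemiR d (ctx_comp G' c)
  end.

Lemma fill_ctx_comp G c x : fill (ctx_comp G c) x = fill G (fill c x).
Proof. induction G; simpl; congruence. Qed.

Section OccurrenceSubstitution.
Variables (psi : formula) (D : bunch).

Inductive subst_occ : bunch -> bunch -> Prop :=
| so_keep p : subst_occ (BForm p) (BForm p)
| so_replace : subst_occ (BForm psi) D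
| so_empM : subst_occ BEmpM BEmpM
| so_empA : subst_occ BEmpA BEmpA
| so_comma a b a' b' :
    subst_occ a a' -> subst_occ b b' -> subst_occ (BComma a b) (BComma a' b')
| so_semi a b a' b' :
    subst_occ a a' -> subst_occ b b' -> subst_occ (BSemi a b) (BSemi a' b').

Inductive ctx_subst_occ : ctx -> ctx -> Prop :=
| cso_hole : ctx_subst_occ CHole CHole
| cso_commaL c c' d d' :
    ctx_subst_occ c c' -> subst_occ d d' -> ctx_subst_occ (CCommaL c d) (CCommaL c' d')
| cso_commaR c c' d d' :
    ctx_subst_occ c c' -> subst_occ d d' -> ctx_subst_occ (CCommaR d c) (CCommaR d' c')
| cso_semiL c c' d d' :
    ctx_subst_occ c c' -> subst_occ d d' -> ctx_subst_occ (CSemiL c d) (CSemiL c' d')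
| cso_semiR c c' d d' :
    ctx_subst_occ c c' -> subst_occ d d' -> ctx_subst_occ (CSemiR d c) (CSemiR d' c').

Hint Constructors subst_occ ctx_subst_occ : core.

Lemma subst_occ_refl b : subst_occ b b.
Proof. induction b; auto. Qed.

Lemma ctx_subst_occ_refl c : ctx_subst_occ c c.
Proof. induction c; auto using subst_occ_refl. Qed.

Lemma subst_occ_fill c c' b b' :
  ctx_subst_occ c c' -> subst_occ b b' -> subst_occ (fill c b) (fill c' b').
Proof. induction 1; simpl; auto. Qed.

Lemma subst_occ_hole G : subst_occ (fill G (BForm psi)) (fill G D).
Proof. auto using subst_occ_fill, ctx_subst_occ_refl. Qed.

Lemma subst_occ_commaE a b X : subst_occ (BComma a b) X ->
  exists a' b', X = BComma a' b' /\ subst_occ a a' /\ subst_occ b b'.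
Proof. inversion 1; eauto. Qed.

Lemma subst_occ_semiE a b X : subst_occ (BSemi a b) X ->
  exists a' b', X = BSemi a' b' /\ subst_occ a a' /\ subst_occ b b'.
Proof. inversion 1; eauto. Qed.

Lemma subst_occ_empME X : subst_occ BEmpM X -> X = BEmpM.
Proof. inversion 1; auto. Qed.

Lemma subst_occ_empAE X : subst_occ BEmpA X -> X = BEmpA.
Proof. inversion 1; auto. Qed.

Lemma subst_occ_formE {p X} : subst_occ (BForm p) X -> X = BForm p \/ (p = psi /\ X = D).
Proof. inversion 1; auto. Qed.

Lemma subst_occ_fillE c b X : subst_occ (fill c b) X ->
  exists c' b', X = fill c' b' /\ ctx_subst_occ c c' /\ subst_occ b b'.
Proof.
  revert X; induction c as [|c IHc d|d c IHc|c IHc d|d c IHc]; simpl; intros X HX.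
  - exists CHole, X; auto.
  - apply subst_occ_commaE in HX as (a' & d' & -> & Ha & Hd).
    destruct (IHc _ Ha) as (c' & b' & -> & ? & ?).
    exists (CCommaL c' d'), b'; auto.
  - apply subst_occ_commaE in HX as (d' & a' & -> & Hd & Ha).
    destruct (IHc _ Ha) as (c' & b' & -> & ? & ?).
    exists (CCommaR d' c'), b'; auto.
  - apply subst_occ_semiE in HX as (a' & d' & -> & Ha & Hd).
    destruct (IHc _ Ha) as (c' & b' & -> & ? & ?).
    exists (CSemiL c' d'), b'; auto.
  - apply subst_occ_semiE in HX as (d' & a' & -> & Hd & Ha).
    destruct (IHc _ Ha) as (c' & b' & -> & ? & ?).
    exists (CSemiR d' c'), b'; auto.
Qed.

Ltac invert_subst_occ := repeat match goal with
  | H : subst_occ (fill _ _) _ |- _ =>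
      apply subst_occ_fillE in H as (? & ? & ? & ? & ?); subst
  | H : subst_occ (BComma _ _) _ |- _ =>
      apply subst_occ_commaE in H as (? & ? & ? & ? & ?); subst
  | H : subst_occ (BSemi _ _) _ |- _ =>
      apply subst_occ_semiE in H as (? & ? & ? & ? & ?); subst
  | H : subst_occ BEmpM _ |- _ => apply subst_occ_empME in H; subst
  | H : subst_occ BEmpA _ |- _ => apply subst_occ_empAE in H; subst
  end.

Definition subst_occ_simulates (d1 d2 : bunch) : Prop :=
  forall X, subst_occ d1 X -> exists Y, subst_occ d2 Y /\ bequiv X Y.

(* Both directions are needed because [bequiv] is closed under symmetry. *)
Lemma subst_occ_bequiv {d1 d2} :
  bequiv d1 d2 -> subst_occ_simulates d1 d2 /\ subst_occ_simulates d2 d1.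
Proof.
  unfold subst_occ_simulates.
  induction 1 as [d|d1 d2 _ [IH12 IH21]|d1 d2 d3 _ [IH12 IH21] _ [IH23 IH32]
                 | | | | | | |c d1 d2 _ [IH12 IH21]].
  - split; eauto using beq_refl.
  - split; intros X HX; [destruct (IH21 X HX) | destruct (IH12 X HX)];
      intuition eauto using beq_sym.
  - split; intros X HX.
    + destruct (IH12 X HX) as (Y & HY & E1), (IH23 Y HY) as (Z & ? & E2).
      eauto using beq_trans.
    + destruct (IH32 X HX) as (Y & HY & E1), (IH21 Y HY) as (Z & ? & E2).
      eauto 6 using beq_trans, beq_sym.
  - split; intros X HX; invert_subst_occ; eauto using beq_comma_comm.
  - split; intros X HX; invert_subst_occ;
      eauto 6 using beq_comma_assoc, beq_sym.
  - split; intros X HX; invert_subst_occ; eauto using beq_comma_unit, beq_sym.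
  - split; intros X HX; invert_subst_occ; eauto using beq_semi_comm.
  - split; intros X HX; invert_subst_occ;
      eauto 6 using beq_semi_assoc, beq_sym.
  - split; intros X HX; invert_subst_occ; eauto using beq_semi_unit, beq_sym.
  - split; intros X HX; invert_subst_occ;
      [destruct (IH12 _ H1) as (Y & ? & ?) | destruct (IH21 _ H1) as (Y & ? & ?)];
      exists (fill x Y); auto using subst_occ_fill, beq_ctx.
Qed.

Lemma subst_occ_bbox :
  (forall a, psi = FBox a -> exists e, D = bbox e) ->
  forall {d X}, subst_occ (bbox d) X -> exists d', X = bbox d'.
Proof.
  intros Dboxed d; induction d as [p| | |d1 IH1 d2 IH2|d1 IH1 d2 IH2];
    simpl; intros X HX; invert_subst_occ.
  - destruct (subst_occ_formE HX) as [-> | [<- ->]].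
    + exists (BForm p); reflexivity.
    + exact (Dboxed p eq_refl).
  - exists BEmpM; reflexivity.
  - exists BEmpA; reflexivity.
  - destruct (IH1 _ H0) as (e1 & ->), (IH2 _ H1) as (e2 & ->).
    exists (BComma e1 e2); reflexivity.
  - destruct (IH1 _ H0) as (e1 & ->), (IH2 _ H1) as (e2 & ->).
    exists (BSemi e1 e2); reflexivity.
Qed.

(* What the left rule for [psi] needs in order to go through with [D] in
   place of the principal occurrence of [psi]. *)
Definition left_rule_admissible : Prop :=
  match psi with
  | FAtom a => cf D (FAtom a)
  | FEmp => forall c r, cf (fill c BEmpM) r -> cf (fill c D) r
  | FTop => forall c r, cf (fill c BEmpA) r -> cf (fill c D) r
  | FBot => forall c r, cf (fill c D) r
  | FStar p q =>
      forall c r, cf (fill c (BComma (BForm p) (BForm q))) r -> cf (fill c D) r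
  | FAnd p q =>
      forall c r, cf (fill c (BSemi (BForm p) (BForm q))) r -> cf (fill c D) r
  | FWand p q => forall c d1 d2 r, cf d1 p ->
      cf (fill c (BComma d2 (BForm q))) r -> cf (fill c (BComma (BComma d1 d2) D)) r
  | FImp p q => forall c d1 d2 r, cf d1 p ->
      cf (fill c (BSemi d2 (BForm q))) r -> cf (fill c (BSemi (BSemi d1 d2) D)) r
  | FOr p q => forall c r,
      cf (fill c (BForm p)) r -> cf (fill c (BForm q)) r -> cf (fill c D) r
  | FBox a => forall c r, cf (fill c (BForm a)) r -> cf (fill c D) r
  end.

Hypothesis left_rule : left_rule_admissible.
Hypothesis D_boxed : forall a, psi = FBox a -> exists e, D = bbox e.

Lemma cf_subst_occ {B phi} : cf B phi -> forall {X}, subst_occ B X -> cf X phi.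
Proof.
  unfold left_rule_admissible in left_rule.
  induction 1 as [| d d' p _ IH Heq | c d1 d2 p _ IH | c d1 p _ IH
                 | | | | | | | | | | | | | | | | |
                 | d a _ IH | ]; intros X HX; invert_subst_occ;
    try match goal with H : subst_occ (BForm _) _ |- _ =>
      destruct (subst_occ_formE H) as [-> | [<- ->]]; clear H; cbn in left_rule end;
    eauto 6 using d_ax, d_empR, d_empL, d_starR, d_starL, d_wandR, d_wandL,
      d_topR, d_topL, d_andR, d_andL, d_impR, d_impL, d_botL, d_orR1, d_orR2,
      d_orL, d_boxL, subst_occ_fill, subst_occ_refl.
  - destruct (proj1 (subst_occ_bequiv Heq) X HX) as (Y & HY & E).
    exact (d_equiv (IH Y HY) E).
  - apply d_weak, IH, subst_occ_fill; auto.
  - apply d_contr, IH, subst_occ_fill; auto.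
  - discriminate.
  - destruct (subst_occ_bbox D_boxed HX) as (d' & ->).
    apply d_boxR, IH, HX.
Qed.

Lemma cf_subst_hole G phi : cf (fill G (BForm psi)) phi -> cf (fill G D) phi.
Proof. intros H; exact (cf_subst_occ H (subst_occ_hole G)). Qed.

End OccurrenceSubstitution.

Definition cut_admissible (x : formula) : Prop :=
  forall D G r, cf D x -> cf (fill G (BForm x)) r -> cf (fill G D) r.

Lemma cut_admissible_in_ctx c {x D G r} : cut_admissible x ->
  cf D x -> cf (fill G (fill c (BForm x))) r -> cf (fill G (fill c D)) r.
Proof. rewrite <- !fill_ctx_comp; auto. Qed.

Section RightRules.
Variables (p q : formula).
Hypotheses (cut_p : cut_admissible p) (cut_q : cut_admissible q).

Lemma left_rule_admissible_star d1 d2 :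
  cf d1 p -> cf d2 q -> left_rule_admissible (FStar p q) (BComma d1 d2).
Proof.
  intros H1 H2 c r H.
  apply (cut_admissible_in_ctx (CCommaR d1 CHole) cut_q H2).
  exact (cut_admissible_in_ctx (CCommaL CHole (BForm q)) cut_p H1 H).
Qed.

Lemma left_rule_admissible_and d1 d2 :
  cf d1 p -> cf d2 q -> left_rule_admissible (FAnd p q) (BSemi d1 d2).
Proof.
  intros H1 H2 c r H.
  apply (cut_admissible_in_ctx (CSemiR d1 CHole) cut_q H2).
  exact (cut_admissible_in_ctx (CSemiL CHole (BForm q)) cut_p H1 H).
Qed.

Lemma left_rule_admissible_wand d :
  cf (BComma d (BForm p)) q -> left_rule_admissible (FWand p q) d.
Proof.
  intros Hd c d1 d2 r H1 H2.
  assert (Hq : cf (BComma d d1) q) by exact (cut_p _ (CCommaR d CHole) _ H1 Hd).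
  apply (d_equiv (cut_admissible_in_ctx (CCommaR d2 CHole) cut_q Hq H2)).
  apply beq_ctx.
  eapply beq_trans; [apply beq_comma_comm|].
  eapply beq_trans; [apply beq_comma_assoc|].
  apply beq_comma_comm.
Qed.

Lemma left_rule_admissible_imp d :
  cf (BSemi d (BForm p)) q -> left_rule_admissible (FImp p q) d.
Proof.
  intros Hd c d1 d2 r H1 H2.
  assert (Hq : cf (BSemi d d1) q) by exact (cut_p _ (CSemiR d CHole) _ H1 Hd).
  apply (d_equiv (cut_admissible_in_ctx (CSemiR d2 CHole) cut_q Hq H2)).
  apply beq_ctx.
  eapply beq_trans; [apply beq_semi_comm|].
  eapply beq_trans; [apply beq_semi_assoc|].
  apply beq_semi_comm.
Qed.

Lemma left_rule_admissible_or1 d : cf d p -> left_rule_admissible (FOr p q) d.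
Proof. intros Hd c r Hp _; exact (cut_p _ _ _ Hd Hp). Qed.

Lemma left_rule_admissible_or2 d : cf d q -> left_rule_admissible (FOr p q) d.
Proof. intros Hd c r _ Hq; exact (cut_q _ _ _ Hd Hq). Qed.

Lemma left_rule_admissible_box d :
  cf (bbox d) p -> left_rule_admissible (FBox p) (bbox d).
Proof. intros Hd c r Hp; exact (cut_p _ _ _ Hd Hp). Qed.

End RightRules.

Definition subformulas_cut_admissible (x : formula) : Prop :=
  match x with
  | FAnd p q | FOr p q | FImp p q | FStar p q | FWand p q =>
      cut_admissible p /\ cut_admissible q
  | FBox a => cut_admissible a
  | _ => True
  end.

Lemma cut_admissible_of_subformulas x :
  subformulas_cut_admissible x -> cut_admissible x.
Proof.
  intros Hsub D G r HD; revert G r.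
  induction HD; intros G phi Hr; simpl in Hsub;
    (* structural and left rules of the left premise permute with the cut *)
    try (rewrite <- fill_ctx_comp; econstructor; rewrite ?fill_ctx_comp; now eauto);
    revert Hr; try solve [intros Hr; exact Hr | intros; discriminate].
  - intros Hr; eapply d_equiv; [| apply beq_ctx; eassumption]; eauto.
  - apply cf_subst_hole; [intros c r H; exact H | intros ? [=]].
  - apply cf_subst_hole; [apply left_rule_admissible_star; tauto | intros ? [=]].
  - apply cf_subst_hole; [apply left_rule_admissible_wand; tauto | intros ? [=]].
  - apply cf_subst_hole; [intros c r H; exact H | intros ? [=]].
  - apply cf_subst_hole; [apply left_rule_admissible_and; tauto | intros ? [=]].
  - apply cf_subst_hole; [apply left_rule_admissible_imp; tauto | intros ? [=]].
  - apply cf_subst_hole; [apply left_rule_admissible_or1; tauto | intros ? [=]].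
  - apply cf_subst_hole; [apply left_rule_admissible_or2; tauto | intros ? [=]].
  - apply cf_subst_hole; [apply left_rule_admissible_box; auto | intros ? [= <-]; eauto].
Qed.

Lemma cut_admissible_all x : cut_admissible x.
Proof. induction x; apply cut_admissible_of_subformulas; simpl; auto. Qed.

End CutAdmissibility.

Theorem theorem8p6 (Atom : Type) (D : bunch Atom) (G : ctx Atom)
    (psi phi : formula Atom) :
  deriv_cf D psi -> deriv_cf (fill G (BForm psi)) phi -> deriv_cf (fill G D) phi.
Proof. exact (@cut_admissible_all Atom psi D G phi). Qed.
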